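(* Assume: (A1) $f(x,y)$ and each component of $g(x,y)$ are convex in $y$ for each fixed $x$, and $f,g$ are twice continuously differentiable; (A2) $Y\subseteq\mathbb{R}^m$ is a compact convex set with $\{y:\exists x\in X \text{ such that } g(x,y)\le 0\}\subseteq\mathrm{int}(Y)$; (A3) $F$ and $G$ are twice continuously differentiable; (R1) for each $x\in X$ there exists $y$ with $g(x,y)<0$. Then for any $\overline{\epsilon}\ge0$, $\lim_{\epsilon\downarrow\overline{\epsilon},\,\mu\downarrow0}\mathcal{C}(\epsilon,\mu)=\mathcal{C}(\overline{\epsilon},0)$, and $\mathcal{C}(\epsilon_1,\mu_1)\supseteq\mathcal{C}(\epsilon_2,\mu_2)$ whenever $\epsilon_1\ge\epsilon_2\ge0$ and $\mu_1\ge\mu_2\ge0$.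
   Context: Let $F:\mathbb{R}^n\times\mathbb{R}^m\to\mathbb{R}$, $f:\mathbb{R}^n\times\mathbb{R}^m\to\mathbb{R}$, $g:\mathbb{R}^n\times\mathbb{R}^m\to\mathbb{R}^p$, $G:\mathbb{R}^n\to\mathbb{R}^q$; vector inequalities componentwise; $X=\{x:G(x)\le0\}$. For $\mu\ge0$, $h_\mu(\lambda,x)=\min_y\{\mu\|y\|^2+f(x,y)+\lambda^{\mathsf T}g(x,y):y\in Y\}$ with $Y$ from (A2), and $\mathcal{C}(\epsilon,\mu)=\{(x,y,\lambda): G(x)\le0,\ g(x,y)\le\epsilon,\ \lambda\ge0,\ f(x,y)-h_\mu(\lambda,x)\le\epsilon\}$. Set limits are in the Painlevé–Kuratowski sense (inner and outer limits coincide with the given set). *)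

From HB Require Import structures.
From mathcomp Require Import all_boot all_order all_algebra.
From mathcomp Require Import all_classical all_reals all_analysis.

Set Implicit Arguments.
Unset Strict Implicit.
Unset Printing Implicit Defensive.

Import Order.TTheory GRing.Theory Num.Theory.
Import numFieldNormedType.Exports.
Local Open Scope classical_set_scope.
Local Open Scope ring_scope.

(* C^1 on a finite-dimensional normed space: differentiable everywhere with
   continuous (directional) derivatives; C^2: C^1 and all directional
   derivatives are themselves C^1.  In finite dimension this is exactly
   twice continuous differentiability. *)
Definition C1 (R : realType) (V W : normedModType R) (f : V -> W) : Prop :=
  (forall x, differentiable f x) /\ (forall v : V, continuous (fun x => 'D_v f x)).

Definition C2 (R : realType) (V W : normedModType R) (f : V -> W) : Prop :=
  C1 f /\ (forall v : V, C1 (fun x => 'D_v f x)).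

Definition joint (R : realType) (n m : nat) (T : Type)
  (f : 'rV[R]_n -> 'rV[R]_m -> T) : 'rV[R]_(n + m) -> T :=
  fun z => f (lsubmx z) (rsubmx z).

Definition sqnorm (R : realType) (k : nat) (y : 'rV[R]_k) : R :=
  \sum_(i < k) y ord0 i ^+ 2.

Definition dotp (R : realType) (k : nat) (a b : 'rV[R]_k) : R :=
  \sum_(i < k) a ord0 i * b ord0 i.

Definition vle (R : realType) (k : nat) (a b : 'rV[R]_k) : Prop :=
  forall i : 'I_k, a ord0 i <= b ord0 i.

Definition Xset (R : realType) (n q : nat) (G : 'rV[R]_n -> 'rV[R]_q)
  : set 'rV[R]_n := [set x | vle (G x) 0].

(* h_mu(lambda, x) = min_{y in Y} mu ||y||^2 + f(x,y) + lambda^T g(x,y)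
   (the minimum exists under (A1)-(A2); written as the infimum) *)
Definition hmu (R : realType) (n m p : nat)
  (f : 'rV[R]_n -> 'rV[R]_m -> R) (g : 'rV[R]_n -> 'rV[R]_m -> 'rV[R]_p)
  (Y : set 'rV[R]_m) (mu : R) (lam : 'rV[R]_p) (x : 'rV[R]_n) : R :=
  inf [set mu * sqnorm y + f x y + dotp lam (g x y) | y in Y].

Definition Cset (R : realType) (n m p q : nat)
  (f : 'rV[R]_n -> 'rV[R]_m -> R) (g : 'rV[R]_n -> 'rV[R]_m -> 'rV[R]_p)
  (G : 'rV[R]_n -> 'rV[R]_q) (Y : set 'rV[R]_m) (eps mu : R)
  : set ('rV[R]_n * 'rV[R]_m * 'rV[R]_p) :=
  [set z | let: (x, y, lam) := z in
     [/\ vle (G x) 0,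
         (forall i : 'I_p, g x y ord0 i <= eps),
         vle 0 lam &
         f x y - hmu f g Y mu lam x <= eps]].

(* Painleve-Kuratowski limits of a set-valued map S(eps, mu) as
   eps decreases to ebar (eps > ebar) and mu decreases to 0 (mu > 0). *)
Definition adm_seq (R : realType) (ebar : R) (e u : nat -> R) : Prop :=
  [/\ (forall k, ebar < e k), (forall k, 0 < u k),
      e @ \oo --> ebar & u @ \oo --> (0 : R)].

Definition PK_outer (R : realType) (T : topologicalType) (ebar : R)
  (S : R -> R -> set T) : set T :=
  [set z | exists (e u : nat -> R) (zs : nat -> T),
     [/\ adm_seq ebar e u, (forall k, S (e k) (u k) (zs k)) & zs @ \oo --> z]].

Definition PK_inner (R : realType) (T : topologicalType) (ebar : R)
  (S : R -> R -> set T) : set T :=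
  [set z | forall (e u : nat -> R), adm_seq ebar e u ->
     exists zs : nat -> T,
       (\forall k \near \oo, S (e k) (u k) (zs k)) /\ zs @ \oo --> z].

From HB Require Import structures.
From mathcomp Require Import all_boot all_order all_algebra.
From mathcomp Require Import all_classical all_reals all_analysis.
From mathcomp Require Import lra.

Set Implicit Arguments.
Unset Strict Implicit.
Unset Printing Implicit Defensive.

Import Order.TTheory GRing.Theory Num.Theory.
Import numFieldNormedType.Exports.
Local Open Scope classical_set_scope.
Local Open Scope ring_scope.

(** The value function [h_mu(lam, x)] is an infimum over the compact set [Y]
    of functions jointly continuous in [(mu, lam, x)], hence it is upper
    semicontinuous in [(mu, lam, x)].  So the constraint [f - h_mu <= eps]
    passes to limits, as do the other (continuous) constraints: every limit
    of points of [C(eps_k, mu_k)] with [eps_k -> ebar], [mu_k -> 0] lies in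
    [C(ebar, 0)].  Conversely [C] is monotone in [(eps, mu)] because [h_mu]
    is, so a constant sequence at a point of [C(ebar, 0)] stays in every
    [C(eps_k, mu_k)]. *)

Section Convergence.
Variable R : realType.

Lemma cvg_row_mx (T : Type) (F : set_system T) {FF : Filter F} a b
    (xs : T -> 'rV[R]_a) (ys : T -> 'rV[R]_b) (x : 'rV[R]_a) (y : 'rV[R]_b) :
  xs @ F --> x -> ys @ F --> y ->
  (fun t => row_mx (xs t) (ys t)) @ F --> row_mx x y.
Proof.
move=> cx cy A /nbhs_ballP [e e0 eA].
have Fx : F [set t | ball x e (xs t)] := cx _ (nbhsx_ballx x e e0).
have Fy : F [set t | ball y e (ys t)] := cy _ (nbhsx_ballx y e e0).
change (F [set t | A (row_mx (xs t) (ys t))]).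
apply: filterS2 Fx Fy => t /= [_ bx] [_ bY]; apply: eA; split => // i j.
by case: (split_ordP j) => k ->; rewrite ?row_mxEl ?row_mxEr; [exact: bx|exact: bY].
Qed.

Lemma cvg_coord (T : Type) (F : set_system T) {FF : Filter F} a b
    (M_ : T -> 'M[R]_(a, b)) (M : 'M[R]_(a, b)) i j :
  M_ @ F --> M -> (fun t => M_ t i j) @ F --> M i j.
Proof. exact: (continuous_cvg _ (@coord_continuous R _ _ i j M)). Qed.

Lemma cvg_dotp (T : Type) (F : set_system T) {FF : Filter F} k
    (a_ b_ : T -> 'rV[R]_k) (a b : 'rV[R]_k) :
  a_ @ F --> a -> b_ @ F --> b -> (fun t => dotp (a_ t) (b_ t)) @ F --> dotp a b.
Proof.
move=> ca cb; apply: cvg_big => //; first exact: add_continuous.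
by move=> i _; apply: cvgM; exact: cvg_coord.
Qed.

Lemma sqnorm_dotp k (y : 'rV[R]_k) : sqnorm y = dotp y y.
Proof. by apply: eq_bigr => i _; rewrite expr2. Qed.

Lemma sqnorm_ge0 k (y : 'rV[R]_k) : 0 <= sqnorm y.
Proof. by apply: sumr_ge0 => i _; exact: sqr_ge0. Qed.

Lemma cvg_joint (T : Type) (F : set_system T) {FF : Filter F} a b
    (W : normedModType R) (h : 'rV[R]_a -> 'rV[R]_b -> W)
    (xs : T -> 'rV[R]_a) (ys : T -> 'rV[R]_b) (x : 'rV[R]_a) (y : 'rV[R]_b) :
  continuous (joint h) ->
  xs @ F --> x -> ys @ F --> y -> (fun t => h (xs t) (ys t)) @ F --> h x y.
Proof.
move=> hc cx cy.
have -> : (fun t => h (xs t) (ys t)) = joint h \o (fun t => row_mx (xs t) (ys t)).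
  by apply: funext => t; rewrite /joint /= row_mxKl row_mxKr.
have -> : h x y = joint h (row_mx x y) by rewrite /joint row_mxKl row_mxKr.
by apply: continuous_cvg; [exact: hc | exact: cvg_row_mx].
Qed.

Lemma cvg_vle k (a_ b_ : nat -> 'rV[R]_k) (a b : 'rV[R]_k) :
  a_ @ \oo --> a -> b_ @ \oo --> b ->
  (\forall t \near \oo, vle (a_ t) (b_ t)) -> vle a b.
Proof.
move=> ca cb le_ab i.
apply: ler_cvg_to (cvg_coord (i := ord0) (j := i) ca) (cvg_coord cb) _.
by apply: filterS le_ab => t; apply.
Qed.

Lemma cvg_triple (T : Type) (F : set_system T) {FF : Filter F}
    (U V W : topologicalType) (zs : T -> U * V * W) (x : U) (y : V) (z : W) :
  zs @ F --> (x, y, z) ->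
  [/\ (fun t => (zs t).1.1) @ F --> x, (fun t => (zs t).1.2) @ F --> y
     & (fun t => (zs t).2) @ F --> z].
Proof.
move=> cz; split.
- have h : (fun w : U * V * W => w.1.1) @ (x, y, z) --> x.
    by apply: cvg_comp; exact: cvg_fst.
  exact: (cvg_comp _ _ cz h).
- have h : (fun w : U * V * W => w.1.2) @ (x, y, z) --> y.
    by apply: cvg_comp; [exact: cvg_fst | exact: cvg_snd].
  exact: (cvg_comp _ _ cz h).
- exact: (cvg_comp _ _ cz cvg_snd).
Qed.

Lemma C2_continuous (V W : normedModType R) (h : V -> W) : C2 h -> continuous h.
Proof. by case=> -[dh _] _ z; exact: differentiable_continuous. Qed.

Lemma has_lbound_continuous_compact (T : topologicalType) (h : T -> R) (A : set T) :
  continuous h -> compact A -> has_lbound (h @` A).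
Proof.
move=> hc Ac.
have [M [_ HM]] := compact_bounded (continuous_compact (continuous_subspaceT hc) Ac).
exists (- (M + 1)) => z Az.
by have := HM (M + 1) (ltr_pwDr ltr01 (lexx _)) z Az; rewrite /= ler_norml => /andP[].
Qed.

Lemma adm_seq_harmonic (ebar : R) :
  adm_seq ebar (fun k => ebar + harmonic k) (fun k => harmonic k).
Proof.
split => [k|k||]; last exact: cvg_harmonic.
- by rewrite ltrDl harmonic_gt0.
- exact: harmonic_gt0.
- rewrite -[X in _ --> X]addr0; apply: cvgD; [exact: cvg_cst | exact: cvg_harmonic].
Qed.

End Convergence.

Section ValueFunction.
Variables (R : realType) (n m p : nat) (f : 'rV[R]_n -> 'rV[R]_m -> R)
  (g : 'rV[R]_n -> 'rV[R]_m -> 'rV[R]_p) (Y : set 'rV[R]_m).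
Hypotheses (fc : continuous (joint f)) (gc : continuous (joint g))
  (Yc : compact Y).

Definition lagrangian (mu : R) (lam : 'rV[R]_p) (x : 'rV[R]_n) (y : 'rV[R]_m) : R :=
  mu * sqnorm y + f x y + dotp lam (g x y).

Lemma cvg_lagrangian (T : Type) (F : set_system T) {FF : Filter F}
    (mus : T -> R) (lams : T -> 'rV[R]_p) (xs : T -> 'rV[R]_n) (ys : T -> 'rV[R]_m)
    mu lam x y :
  mus @ F --> mu -> lams @ F --> lam -> xs @ F --> x -> ys @ F --> y ->
  (fun t => lagrangian (mus t) (lams t) (xs t) (ys t)) @ F --> lagrangian mu lam x y.
Proof.
move=> cmu cl cx cy; apply: cvgD; first apply: cvgD.
- apply: cvgM cmu _; rewrite sqnorm_dotp.
  under eq_fun do rewrite sqnorm_dotp; exact: cvg_dotp.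
- exact: cvg_joint.
- by apply: cvg_dotp => //; exact: cvg_joint.
Qed.

Lemma continuous_lagrangian mu lam x : continuous (lagrangian mu lam x).
Proof.
by move=> y; apply: (cvg_lagrangian (F := nbhs y) (cvg_cst _) (cvg_cst _) (cvg_cst _) cvg_id).
Qed.

Lemma hmu_le_lagrangian mu lam x y :
  Y y -> hmu f g Y mu lam x <= lagrangian mu lam x y.
Proof.
move=> Yy; apply: ge_inf; last by exists y.
exact: (has_lbound_continuous_compact (@continuous_lagrangian mu lam x) Yc).
Qed.

Lemma hmu_set0 mu lam x : hmu f g set0 mu lam x = 0.
Proof. by rewrite /hmu image_set0 inf0. Qed.

Lemma le_hmu mu1 mu2 lam x : 0 <= mu2 -> mu2 <= mu1 ->
  hmu f g Y mu2 lam x <= hmu f g Y mu1 lam x.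
Proof.
move=> mu2_ge0 le_mu.
have [->|/set0P [y0 Yy0]] := eqVneq Y set0; first by rewrite !hmu_set0.
apply: lb_le_inf; first by exists (lagrangian mu1 lam x y0), y0.
move=> _ [y Yy <-]; apply: le_trans (hmu_le_lagrangian mu2 lam x Yy) _.
by rewrite /lagrangian !lerD2r ler_wpM2r // sqnorm_ge0.
Qed.

(* Upper semicontinuity of [hmu] in [(mu, lam, x)]. *)
Lemma cvg_le_hmu (a : nat -> R) (mus : nat -> R) (lams : nat -> 'rV[R]_p)
    (xs : nat -> 'rV[R]_n) a0 mu lam x :
  a @ \oo --> a0 -> mus @ \oo --> mu -> lams @ \oo --> lam -> xs @ \oo --> x ->
  (\forall k \near \oo, a k <= hmu f g Y (mus k) (lams k) (xs k)) ->
  a0 <= hmu f g Y mu lam x.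
Proof.
move=> ca cmu cl cx le_a.
have [Y0|/set0P [y0 Yy0]] := eqVneq Y set0.
  move: le_a; rewrite Y0 hmu_set0; under eq_near do rewrite hmu_set0.
  exact: ler_cvg_to ca (cvg_cst 0).
apply: lb_le_inf; first by exists (lagrangian mu lam x y0), y0.
move=> _ [y Yy <-].
apply: ler_cvg_to ca (cvg_lagrangian cmu cl cx (cvg_cst y)) _.
by apply: filterS le_a => k /le_trans; apply; exact: hmu_le_lagrangian.
Qed.

End ValueFunction.

Section FeasibleSets.
Variables (R : realType) (n m p q : nat) (f : 'rV[R]_n -> 'rV[R]_m -> R)
  (g : 'rV[R]_n -> 'rV[R]_m -> 'rV[R]_p) (G : 'rV[R]_n -> 'rV[R]_q)
  (Y : set 'rV[R]_m).
Hypotheses (fc : continuous (joint f)) (gc : continuous (joint g))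
  (Gc : continuous G) (Yc : compact Y).

Let C := Cset f g G Y.

Lemma le_Cset eps1 eps2 mu1 mu2 : eps2 <= eps1 -> 0 <= mu2 -> mu2 <= mu1 ->
  C eps2 mu2 `<=` C eps1 mu1.
Proof.
move=> le_eps mu2_ge0 le_mu [[x y] lam] [GX gy lam_ge0 fh]; split => //.
- by move=> i; exact: le_trans (gy i) le_eps.
- by have := le_hmu fc gc Yc lam x mu2_ge0 le_mu; lra.
Qed.

Lemma Cset_cvg (e u : nat -> R) (xs : nat -> 'rV[R]_n) (ys : nat -> 'rV[R]_m)
    (lams : nat -> 'rV[R]_p) ebar mu x y lam :
  e @ \oo --> ebar -> u @ \oo --> mu ->
  xs @ \oo --> x -> ys @ \oo --> y -> lams @ \oo --> lam ->
  (\forall k \near \oo, C (e k) (u k) (xs k, ys k, lams k)) ->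
  C ebar mu (x, y, lam).
Proof.
move=> ce cu cx cy cl C_near; split.
- have cG : (fun k => G (xs k)) @ \oo --> G x by apply: continuous_cvg => //; exact: Gc.
  apply: cvg_vle cG (cvg_cst (0 : 'rV[R]_q)) _.
  by apply: filterS C_near => k [].
- move=> i; apply: ler_cvg_to (cvg_coord (cvg_joint gc cx cy)) ce _.
  by apply: filterS C_near => k [_ + _ _]; apply.
- apply: cvg_vle (cvg_cst (0 : 'rV[R]_p)) cl _.
  by apply: filterS C_near => k [].
- suff : f x y - ebar <= hmu f g Y mu lam x by lra.
  apply: (cvg_le_hmu fc gc Yc (cvgB (cvg_joint fc cx cy) ce) cu cl cx).
  by apply: filterS C_near => k [_ _ _] ?; rewrite !fctE; lra.
Qed.

Lemma Cset_adm_seq ebar e u k z :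
  adm_seq ebar e u -> C ebar 0 z -> C (e k) (u k) z.
Proof. by case=> e_gt u_gt _ _; apply: le_Cset => //; exact: ltW. Qed.

Lemma PK_outer_Cset ebar : PK_outer ebar C = C ebar 0.
Proof.
apply/seteqP; split => [[[x y] lam]|z Cz].
- move=> [e [u [zs [[_ _ ce cu] Czs /cvg_triple [cx cy cl]]]]].
  apply: Cset_cvg ce cu cx cy cl _; apply: filterE => k.
  by case: (zs k) (Czs k) => -[].
- have adm := adm_seq_harmonic ebar.
  exists (fun k => ebar + harmonic k), (fun k => harmonic k), (fun=> z).
  split => // [k|]; last exact: cvg_cst.
  exact: Cset_adm_seq adm Cz.
Qed.

Lemma PK_inner_Cset ebar : PK_inner ebar C = C ebar 0.
Proof.
apply/seteqP; split => [[[x y] lam] inner_z|z Cz e u adm].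
- have adm := adm_seq_harmonic ebar; have [_ _ ce cu] := adm.
  have [zs [Czs /cvg_triple [cx cy cl]]] := inner_z _ _ adm.
  apply: Cset_cvg ce cu cx cy cl _; apply: filterS Czs => k.
  by case: (zs k) => -[].
- exists (fun=> z); split; last exact: cvg_cst.
  apply: filterE => k; exact: Cset_adm_seq adm Cz.
Qed.

End FeasibleSets.

Theorem proposition6 (R : realType) (n m p q : nat)
  (F : 'rV[R]_n -> 'rV[R]_m -> R) (f : 'rV[R]_n -> 'rV[R]_m -> R)
  (g : 'rV[R]_n -> 'rV[R]_m -> 'rV[R]_p) (G : 'rV[R]_n -> 'rV[R]_q)
  (Y : set 'rV[R]_m) :
  (* (A1) *)
  (forall x, convex_function setT (f x)) ->
  (forall x (i : 'I_p), convex_function setT (fun y => g x y ord0 i)) ->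
  C2 (joint f) -> C2 (joint g) ->
  (* (A2) *)
  compact Y -> convex_set Y ->
  [set y | exists2 x, Xset G x & vle (g x y) 0] `<=` interior Y ->
  (* (A3) *)
  C2 (joint F) -> C2 G ->
  (* (R1) *)
  (forall x, Xset G x -> exists y, forall i : 'I_p, g x y ord0 i < 0) ->
  (forall ebar : R, 0 <= ebar ->
     PK_inner ebar (Cset f g G Y) = Cset f g G Y ebar 0 /\
     PK_outer ebar (Cset f g G Y) = Cset f g G Y ebar 0) /\
  (forall eps1 eps2 mu1 mu2 : R, eps2 <= eps1 -> 0 <= eps2 ->
     mu2 <= mu1 -> 0 <= mu2 ->
     Cset f g G Y eps2 mu2 `<=` Cset f g G Y eps1 mu1).
Proof.
move=> _ _ /C2_continuous fc /C2_continuous gc Yc _ _ _ /C2_continuous Gc _.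
split=> [ebar _|eps1 eps2 mu1 mu2 le_eps _ le_mu mu2_ge0].
- by rewrite (PK_inner_Cset fc gc Gc Yc) (PK_outer_Cset fc gc Gc Yc).
- exact: (le_Cset (G := G) fc gc Yc le_eps mu2_ge0 le_mu).
Qed.
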